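(* Let $G$ be an $(n,n,p_s,p_d)$-two-island network with groups $V_1,V_2$ and degree of homophily $h_G=p_s/p_d$, and let the dual opinions evolve according to the dynamics in the context with common resilience $\phi\in(0,1)$, common bias $b$ with $\frac{2}{\phi(h_G-1)+2}<b<1$, and the symmetric initial condition $x_i(0)=x_0\in(\tfrac12,1)$, $y_i(0)=y_0\in[\tfrac12,x_0]$ for $i\in V_1$, $x_j(0)=1-x_0$, $y_j(0)=1-y_0$ for $j\in V_2$. Let $i\in V_1$. If there exists $T>0$ such that $\hat x(\phi,h_G,b)\le x_i(t)<\hat x(1,h_G,b)$ for all $t\ge T$, then there exists $\mathcal T>T$ such that $x_i(t)$ and $y_i(t)$ are monotonic for $t\ge\mathcal T$, and $$\lim_{t\to\infty}x_i(t)=\hat x(\phi,h_G,b),\qquad \lim_{t\to\infty}y_i(t)=\frac{\phi(h_G+1)\hat x(\phi,h_G,b)+1-\phi}{\phi h_G+2-\phi}.$$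
   Context: Let $n\ge 1$ and $p_s,p_d\in(0,1)$ with $p_s>p_d$ and $np_s,np_d$ positive integers. An $(n,n,p_s,p_d)$-two-island network is an undirected graph (no self-loops) with vertex set $V=V_1\cup V_2$, $V_1\cap V_2=\emptyset$, $|V_1|=|V_2|=n$, such that each node of $V_1$ has exactly $np_s$ neighbours in $V_1$ and $np_d$ neighbours in $V_2$, and each node of $V_2$ has exactly $np_s$ neighbours in $V_2$ and $np_d$ neighbours in $V_1$. Its degree of homophily is $h_G=p_s/p_d>1$. Let $w_{ij}\in\{0,1\}$ be the adjacency matrix, $N_i$ the set of neighbours of $i$, and $d_i=\sum_{j\in N_i}w_{ij}$. Dual opinions dynamics: each $i\in V$ has $x_i(t),y_i(t)\in[0,1]$, $t=0,1,2,\dots$, updated by $$x_i(t+1)=\frac{x_i(t)^{b}s_i(t)}{x_i(t)^{b}s_i(t)+(1-x_i(t))^{b}(d_i-s_i(t))},\qquad y_i(t+1)=\phi\, x_i(t+1)+(1-\phi)\hat y_{i,avg}(t),$$ with $s_i(t)=\sum_{j\in N_i}w_{ij}y_j(t)$ and $\hat y_{i,avg}(t)=\sum_{j\in N_i}\frac{w_{ij}}{d_i}y_j(t)$. For $0<b<1$ define $g(x,b)=\frac{x^{1-b}-(1-x)^{1-b}}{x(1-x)^{1-b}-(1-x)x^{1-b}}$ for $x\in(\tfrac12,1)$ and $g(\tfrac12,b)=\frac2b-2$. For $\psi\in(0,1]$ with $\frac{2}{\psi(h_G-1)+2}<b<1$, $\hat x(\psi,h_G,b)$ denotes the unique solution $x\in(\tfrac12,1)$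 of $g(x,b)=\psi(h_G-1)$ (in particular $\hat x(1,h_G,b)$ solves $g(x,b)=h_G-1$). *)

From HB Require Import structures.
From mathcomp Require Import all_boot all_order all_algebra.
From mathcomp Require Import all_classical all_reals all_analysis.
Set Implicit Arguments. Unset Strict Implicit. Unset Printing Implicit Defensive.
Import Order.TTheory GRing.Theory Num.Theory.
Local Open Scope classical_set_scope.
Local Open Scope ring_scope.

Definition two_island (R : realType) (T : finType) (e : rel T) (V1 : {set T})
    (n : nat) (ps pd : R) : Prop :=
  (1 <= n)%N /\ 0 < pd /\ pd < ps /\ ps < 1 /\
      (exists ks : nat, (0 < ks)%N /\ n%:R * ps = ks%:R) /\
      (exists kd : nat, (0 < kd)%N /\ n%:R * pd = kd%:R) /\
      #|V1| = n /\ #|~: V1| = n /\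
      (forall i j, e i j = e j i) /\ (forall i, ~~ e i i) /\
      (forall i, (#|[set j in V1 | e i j]|%:R : R) =
                   (if i \in V1 then n%:R * ps else n%:R * pd)
               /\ (#|[set j in ~: V1 | e i j]|%:R : R) =
                   (if i \in V1 then n%:R * pd else n%:R * ps)).

Definition w (R : realType) (T : finType) (e : rel T) (i j : T) : R := (e i j)%:R.
Definition deg (R : realType) (T : finType) (e : rel T) (i : T) : R :=
  \sum_(j | e i j) w R e i j.

Definition dual_dynamics (R : realType) (T : finType) (e : rel T) (b phi : R)
    (x y : nat -> T -> R) : Prop :=
  forall (t : nat) (i : T),
    let s := \sum_(j | e i j) w R e i j * y t j in
    let yavg := \sum_(j | e i j) (w R e i j / deg R e i) * y t j in
    x t.+1 i = (x t i `^ b * s) /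
               (x t i `^ b * s + (1 - x t i) `^ b * (deg R e i - s))
    /\ y t.+1 i = phi * x t.+1 i + (1 - phi) * yavg.

Definition g (R : realType) (x b : R) : R :=
  if x == 2^-1 then 2 / b - 2
  else (x `^ (1 - b) - (1 - x) `^ (1 - b)) /
       (x * (1 - x) `^ (1 - b) - (1 - x) * x `^ (1 - b)).

Definition xhat (R : realType) (psi h b : R) : R :=
  xget (2^-1 : R) [set x : R | 2^-1 < x < 1 /\ g x b = psi * (h - 1)].

Definition monotone_from (R : realType) (u : nat -> R) (T0 : nat) : Prop :=
  (forall s t, (T0 <= s)%N -> (s <= t)%N -> u s <= u t) \/
  (forall s t, (T0 <= s)%N -> (s <= t)%N -> u t <= u s).

From HB Require Import structures.
From mathcomp Require Import all_boot all_order all_algebra.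
From mathcomp Require Import all_classical all_reals all_analysis.
From mathcomp Require Import ring lra.
Set Implicit Arguments. Unset Strict Implicit. Unset Printing Implicit Defensive.
Import Order.TTheory GRing.Theory Num.Theory numFieldNormedType.Exports.
Local Open Scope classical_set_scope.
Local Open Scope ring_scope.

(* Both the graph and the initial condition are invariant under swapping the
   islands together with x |-> 1 - x, so every node of V1 carries (X t, Y t) and
   every node of V2 carries (1 - X t, 1 - Y t): the dynamics reduces to a planar
   map that is nondecreasing in both coordinates.  Hence the increments
   X t.+2 - X t.+1 and Y t.+1 - Y t push each other's sign forward and are
   eventually of constant sign, so X and Y are eventually monotone and, being
   bounded, converge to a fixed point of the planar map.  Writing
   c = phi (h - 1) and k = c / (c + 2), the fixed point equation for X reads
   (1 - b) logit X = logit (1/2 + k (X - 1/2)), which is also equivalent to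
   g X b = c.  When 1 - b < k the difference of the two sides vanishes at 1/2
   and its derivative changes sign exactly once on (1/2, 1), so it has exactly
   one root there, namely xhat phi h b; the band hypothesis only keeps the
   limit inside (1/2, 1). *)

Section LogitGap.
Variable R : realType.
Implicit Types r k x a c : R.

Definition contract_half k x : R := 2^-1 + k * (x - 2^-1).
Definition logit x : R := ln x - ln (1 - x).

Lemma logitE x : 0 < x < 1 -> logit x = ln (x / (1 - x)).
Proof. by case/andP=> x0 x1; rewrite ln_div // posrE subr_gt0. Qed.

Lemma logit_le x y : 0 < x -> x <= y -> y < 1 -> logit x <= logit y.
Proof.
move=> x0 xy y1; have y0 := lt_le_trans x0 xy; have x1 := le_lt_trans xy y1.
rewrite /logit lerB // ler_ln ?posrE ?subr_gt0 //; lra.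
Qed.

Lemma logit_logistic z : logit (expR z / (1 + expR z)) = z.
Proof.
have e0 := expR_gt0 z.
rewrite logitE; last by rewrite divr_gt0 ?ltr_pdivrMr /=; lra.
by rewrite (_ : _ / _ = expR z) ?expRK //; field; lra.
Qed.

Definition logit_gap r k x : R := r * logit x - logit (contract_half k x).
Definition logit_gap' r k x : R :=
  r / x + r / (1 - x) - k / contract_half k x - k / (1 - contract_half k x).

Lemma contract_half_bounds k x : 0 <= k <= 1 -> 0 < x < 1 ->
  0 < contract_half k x < 1.
Proof.
by move=> /andP[k0 k1] /andP[x0 x1]; rewrite /contract_half; apply/andP; split; nra.
Qed.

Lemma logit_gap_half r k : logit_gap r k 2^-1 = 0.
Proof.
have half : 1 - 2^-1 = 2^-1 :> R by field.
by rewrite /logit_gap /logit /contract_half subrr mulr0 addr0 half !subrr mulr0 subr0.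
Qed.

Lemma is_derive_ln_affine a c x : 0 < a ->
  is_derive x 1 (fun y : R => ln (a + c * (y - x))) (c / a).
Proof.
move=> a0.
have affine : is_derive x 1 (fun y : R => a + c * (y - x)) c.
  have -> : (fun y : R => a + c * (y - x)) = cst a + c \*: (id - cst x) by [].
  by apply: is_derive_eq; rewrite add0r subr0 scaler1.
have := is_derive1_comp (is_derive1_ln _) affine.
by rewrite subrr mulr0 addr0 mulrC; apply.
Qed.

Lemma is_derive_logit_gap r k x : 0 <= k <= 1 -> 0 < x < 1 ->
  is_derive x 1 (logit_gap r k) (logit_gap' r k x).
Proof.
move=> hk hx; have /andP[s0 s1] := contract_half_bounds hk hx.
case/andP: hx => x0 x1.
have -> : logit_gap r k = r \*: (fun y => ln (x + 1 * (y - x)))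
   - r \*: (fun y => ln ((1 - x) + (-1) * (y - x)))
   - (fun y => ln (contract_half k x + k * (y - x)))
   + (fun y => ln ((1 - contract_half k x) + (-k) * (y - x))).
  apply/funext => y; rewrite /logit_gap /logit !fctE /=.
  have -> : x + 1 * (y - x) = y by ring.
  have -> : 1 - x + -1 * (y - x) = 1 - y by ring.
  have -> : contract_half k x + k * (y - x) = contract_half k y.
    by rewrite /contract_half; ring.
  have -> : 1 - contract_half k x + - k * (y - x) = 1 - contract_half k y.
    by rewrite /contract_half; ring.
  by rewrite /GRing.scale /=; ring.
apply: is_derive_eq.
  apply: is_deriveD; first apply: is_deriveB; first apply: is_deriveB.
  - apply: is_deriveZ; exact: is_derive_ln_affine.
  - by apply: is_deriveZ; apply: is_derive_ln_affine; rewrite subr_gt0.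
  - exact: is_derive_ln_affine.
  - by apply: is_derive_ln_affine; rewrite subr_gt0.
rewrite /logit_gap' /GRing.scale /=; field.
all: by rewrite ?lt0r_neq0 ?subr_gt0.
Qed.

Lemma logit_gap_MVT r k u v : 0 <= k <= 1 -> 0 < u -> u < v -> v < 1 ->
  exists2 c, u < c < v & logit_gap r k v - logit_gap r k u = logit_gap' r k c * (v - u).
Proof.
move=> hk u0 uv v1.
have der c : u <= c -> c <= v -> is_derive c 1 (logit_gap r k) (logit_gap' r k c).
  by move=> uc cv; apply: is_derive_logit_gap => //; apply/andP; split; lra.
have cont : {within `[u, v], continuous (logit_gap r k)}.
  apply: derivable_within_continuous => c; rewrite in_itv /= => /andP[uc cv].
  by apply: ex_derive; apply: der.
have [c|c] := @MVT R (logit_gap r k) (logit_gap' r k) u v uv _ cont.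
  by rewrite in_itv /= => /andP[uc cv]; apply: der; apply: ltW.
by rewrite in_itv /= => cuv mvt; exists c.
Qed.

Lemma logit_gap'E r k x : 0 <= k <= 1 -> 0 < x < 1 ->
  logit_gap' r k x = ((r - k) / 4 + (x - 2^-1) ^+ 2 * (k * (1 - r * k))) /
    (x * (1 - x) * (contract_half k x * (1 - contract_half k x))).
Proof.
move=> hk hx; have /andP[s0 s1] := contract_half_bounds hk hx.
case/andP: hx => x0 x1; move: s0 s1; rewrite /logit_gap' /contract_half => s0 s1.
field; rewrite ?mulf_neq0 ?lt0r_neq0 ?subr_gt0 //; lra.
Qed.

Lemma logit_gap'_lt0 r k x : 0 <= k <= 1 -> 0 < x < 1 ->
  (x - 2^-1) ^+ 2 * (4 * k * (1 - r * k)) < k - r -> logit_gap' r k x < 0.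
Proof.
move=> hk hx small; have /andP[s0 s1] := contract_half_bounds hk hx.
case/andP: (hx) => x0 x1.
rewrite logit_gap'E // pmulr_llt0; first lra.
by rewrite invr_gt0 !mulr_gt0 ?subr_gt0.
Qed.

Lemma logit_gap'_eq0 r k x : 0 <= k <= 1 -> 0 < x < 1 ->
  logit_gap' r k x = 0 -> (x - 2^-1) ^+ 2 * (4 * k * (1 - r * k)) = k - r.
Proof.
move=> hk hx; have /andP[s0 s1] := contract_half_bounds hk hx.
case/andP: (hx) => x0 x1.
rewrite logit_gap'E // => /eqP; rewrite mulf_eq0 invr_eq0 orbC.
rewrite (gt_eqF _) /= ?mulr_gt0 ?subr_gt0 // => /eqP; lra.
Qed.

(* Rolle's theorem on [1/2, u] and [u, v] yields two distinct critical points
   in (1/2, 1), but [logit_gap'_eq0] determines a critical point c from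
   (c - 1/2)^2. *)
Lemma logit_gap_root_unique r k u v : 0 < r -> r < k -> k < 1 ->
  2^-1 < u < 1 -> 2^-1 < v < 1 ->
  logit_gap r k u = 0 -> logit_gap r k v = 0 -> u = v.
Proof.
move=> r0 rk k1.
have k0 : 0 < k by apply: lt_trans rk.
have hk : 0 <= k <= 1 by rewrite !ltW.
have rk1 : 0 < 1 - r * k by rewrite subr_gt0 mulr_ilt1 ?ltW // (lt_trans rk).
have h0 : (0 : R) < 2^-1 by [].
have crit c : logit_gap' r k c = 0 -> 2^-1 < c -> c < 1 ->
    (c - 2^-1) ^+ 2 * (4 * k * (1 - r * k)) = k - r.
  by move=> dc c0 c1; apply: logit_gap'_eq0 dc; rewrite // c1 (lt_trans h0).
wlog uv : u v / u < v => [W hu hv gu gv|/andP[u0 u1] /andP[v0 v1] gu gv].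
  by case: (ltgtP u v) => [/W|/W|//]; [apply | move=> H; symmetry; apply: H].
have [c1 /andP[c10 c11]] := logit_gap_MVT r hk h0 u0 u1.
rewrite logit_gap_half gu subrr => /esym/eqP.
rewrite mulf_eq0 (subr_eq0 u) (gt_eqF u0) orbF => /eqP/crit.
move=> /(_ c10 (lt_trans c11 u1)) e1.
have [c2 /andP[c20 c21]] := logit_gap_MVT r hk (lt_trans h0 u0) uv v1.
rewrite gu gv subrr => /esym/eqP.
rewrite mulf_eq0 (subr_eq0 v) (gt_eqF uv) orbF => /eqP/crit.
move=> /(_ (lt_trans u0 c20) (lt_trans c21 v1)) e2.
have : (c1 - 2^-1) ^+ 2 = (c2 - 2^-1) ^+ 2.
  have q0 : 0 < 4 * k * (1 - r * k) by rewrite !mulr_gt0.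
  by apply: (mulIf (lt0r_neq0 q0)); rewrite e1 e2.
nra.
Qed.

Lemma logit_gap_lt0_near_half r k : 0 < r -> r < k -> k < 1 ->
  exists2 p, 2^-1 < p < 1 & forall x, 2^-1 < x <= p -> logit_gap r k x < 0.
Proof.
move=> r0 rk k1.
have k0 : 0 < k by apply: lt_trans rk.
have hk : 0 <= k <= 1 by rewrite !ltW.
have rk1 : 0 < 1 - r * k by rewrite subr_gt0 mulr_ilt1 ?ltW // (lt_trans rk).
have q0 : 0 < 4 * k * (1 - r * k) by rewrite !mulr_gt0.
have [D [D0 D1 DE]] :
    exists D, [/\ 0 < D, D < 4^-1 & D * (4 * k * (1 - r * k)) = k - r].
  exists ((k - r) / (4 * k * (1 - r * k))); split; last by rewrite divfK ?lt0r_neq0.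
    by rewrite divr_gt0 ?subr_gt0.
  rewrite ltr_pdivrMr // (_ : 4^-1 * _ = k * (1 - r * k)); last by field.
  rewrite -subr_gt0 (_ : _ - _ = r * (1 - k * k)); last by ring.
  by rewrite mulr_gt0 // subr_gt0 mulr_ilt1 ?ltW.
have p1 : 2^-1 + D < 1 by lra.
exists (2^-1 + D); first by rewrite p1 ltrDl D0.
move=> x /andP[x0 xp].
have h0 : (0 : R) < 2^-1 by [].
have [c /andP[c0 c1]] := logit_gap_MVT r hk h0 x0 (le_lt_trans xp p1).
rewrite logit_gap_half subr0 => ->; rewrite pmulr_llt0 ?subr_gt0 //.
apply: logit_gap'_lt0 => //; first by apply/andP; split; lra.
have : (c - 2^-1) ^+ 2 < c - 2^-1 by rewrite expr2 gtr_pMr; lra.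
by rewrite -DE => sq; rewrite ltr_pM2r //; lra.
Qed.

Lemma logit_gap_gt0_near_one r k : 0 < r -> 0 < k < 1 ->
  exists2 q, 2^-1 < q < 1 & 0 < logit_gap r k q.
Proof.
move=> r0 /andP[k0 k1].
have hk : 0 <= k <= 1 by rewrite !ltW.
have L0 : 0 < logit ((1 + k) / 2).
  have hm : 0 < (1 + k) / 2 < 1 by apply/andP; split; lra.
  by rewrite logitE // ln_gt0 // ltr_pdivlMr ?subr_gt0; lra.
have [z z0 rz] : exists2 z, 0 < z & r * z = 2 * logit ((1 + k) / 2).
  exists (2 * logit ((1 + k) / 2) / r); first by rewrite divr_gt0 ?mulr_gt0.
  by rewrite mulrC divfK ?lt0r_neq0.
have e1 : 1 < expR z by rewrite expR_gt1.
have hq : 2^-1 < expR z / (1 + expR z) < 1.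
  by apply/andP; split; [rewrite ltr_pdivlMr | rewrite ltr_pdivrMr]; lra.
exists (expR z / (1 + expR z)) => //.
move: (expR z / _) hq (logit_logistic z) => q /andP[q0 q1] lq.
have /andP[s0 s1] : 0 < contract_half k q < 1.
  by apply: contract_half_bounds => //; apply/andP; split; lra.
have : logit (contract_half k q) <= logit ((1 + k) / 2).
  by apply: logit_le => //; rewrite /contract_half; nra.
rewrite /logit_gap lq rz; lra.
Qed.

Lemma logit_gap_root_exists r k : 0 < r -> r < k -> k < 1 ->
  exists2 c, 2^-1 < c < 1 & logit_gap r k c = 0.
Proof.
move=> r0 rk k1.
have k0 : 0 < k by apply: lt_trans rk.
have hk : 0 <= k <= 1 by rewrite !ltW.
have [p /andP[p0 p1] neg] := logit_gap_lt0_near_half r0 rk k1.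
have [q /andP[q0 q1] pos] : exists2 q, 2^-1 < q < 1 & 0 < logit_gap r k q.
  by apply: logit_gap_gt0_near_one; rewrite ?k0.
have pq : p < q.
  by rewrite ltNge; apply/negP => qp; have := neg q; rewrite q0 qp => /(_ isT); lra.
have negp : logit_gap r k p < 0 by apply: neg; rewrite p0 lexx.
have cont : {within `[p, q], continuous (logit_gap r k)}.
  apply: derivable_within_continuous => c; rewrite in_itv /= => /andP[pc cq].
  by apply: ex_derive; apply: is_derive_logit_gap => //; apply/andP; split; lra.
have [|c] := @IVT R (logit_gap r k) p q 0 (ltW pq) cont.
  by rewrite /Num.min /Num.max !ifT; [apply/andP; split; lra | lra | lra].
by rewrite in_itv /= => /andP[pc cq] c0; exists c => //; apply/andP; split; lra.
Qed.
End LogitGap.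

Section HomophilyRoot.
Variable R : realType.
Implicit Types b c r k x : R.

Lemma logit_gap_eq0P r k x : 0 <= k <= 1 -> 0 < x < 1 ->
  logit_gap r k x = 0 <->
  x `^ r * (1 - contract_half k x) = (1 - x) `^ r * contract_half k x.
Proof.
move=> hk hx; have /andP[s0 s1] := contract_half_bounds hk hx.
case/andP: hx => x0 x1.
have pos : forall y z, 0 < y -> 0 < z -> y `^ r * z \is Num.pos.
  by move=> y z y0 z0; rewrite posrE mulr_gt0 ?powR_gt0.
have -> : logit_gap r k x =
    ln (x `^ r * (1 - contract_half k x)) - ln ((1 - x) `^ r * contract_half k x).
  by rewrite !lnM ?posrE ?powR_gt0 ?subr_gt0 // !ln_powR /logit_gap /logit; ring.
split=> [/eqP|->]; last by rewrite subrr.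
by rewrite subr_eq0 => /eqP/ln_inj; apply; apply: pos; rewrite ?subr_gt0.
Qed.

Lemma g_eq_balance b c x : b < 1 -> 0 < c -> 2^-1 < x < 1 ->
  g x b = c <->
  x `^ (1 - b) * (1 - contract_half (c / (c + 2)) x) =
  (1 - x) `^ (1 - b) * contract_half (c / (c + 2)) x.
Proof.
move=> b1 c0 /andP[xh x1].
have x0 : 0 < x by apply: lt_trans xh.
have A0 : 0 < x `^ (1 - b) by apply: powR_gt0.
have BA : (1 - x) `^ (1 - b) < x `^ (1 - b).
  by apply: gt0_ltr_powR; rewrite ?subr_gt0 ?nnegrE //; lra.
have c2 : c + 2 != 0 by rewrite lt0r_neq0 //; lra.
move: A0 BA; rewrite /g (gt_eqF xh).
move: (x `^ (1 - b)) ((1 - x) `^ (1 - b)) => A B A0 BA.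
have key : (A - B) - c * (x * B - (1 - x) * A) =
    (c + 2) * (A * (1 - contract_half (c / (c + 2)) x) -
               B * contract_half (c / (c + 2)) x).
  by rewrite /contract_half; field.
split=> [gc|bal].
  have den : x * B - (1 - x) * A != 0.
    by apply: contraPneq gc => ->; rewrite invr0 mulr0; lra.
  apply/eqP; rewrite -subr_eq0 -(mulrI_eq0 _ (lregP c2)) -key.
  by rewrite -gc divfK // subrr.
have : (A - B) - c * (x * B - (1 - x) * A) = 0 by rewrite key bal subrr mulr0.
move=> /eqP; rewrite subr_eq0 => /eqP AB.
rewrite AB mulfK //; apply: contraTneq BA => den0.
by rewrite -subr_gt0 AB den0 mulr0 ltxx.
Qed.

Lemma g_eq_logit_gap b c x : b < 1 -> 0 < c -> 2^-1 < x < 1 ->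
  g x b = c <-> logit_gap (1 - b) (c / (c + 2)) x = 0.
Proof.
move=> b1 c0 hx; rewrite g_eq_balance // logit_gap_eq0P //.
  by rewrite divr_ge0 ?ler_pdivrMr ?ltW //=; lra.
by case/andP: hx => x0 x1; apply/andP; split; lra.
Qed.

Lemma bias_threshold_gap b c : 0 < c -> 2 / (c + 2) < b ->
  [/\ 1 - b < c / (c + 2), 0 < c / (c + 2) & c / (c + 2) < 1].
Proof.
move=> c0 hb; have c2 : 0 < c + 2 by lra.
rewrite divr_gt0 // ltr_pdivrMr // mul1r; split=> //; last lra.
by rewrite (_ : c / (c + 2) = 1 - 2 / (c + 2)); [lra | field; lra].
Qed.

Lemma g_root_unique b c x y : b < 1 -> 0 < c -> 2 / (c + 2) < b ->
  2^-1 < x < 1 -> 2^-1 < y < 1 -> g x b = c -> g y b = c -> x = y.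
Proof.
move=> b1 c0 hb hx hy; rewrite !g_eq_logit_gap //.
have [rk k0 k1] := bias_threshold_gap c0 hb.
by apply: logit_gap_root_unique; rewrite // subr_gt0.
Qed.

Lemma g_root_exists b c : b < 1 -> 0 < c -> 2 / (c + 2) < b ->
  exists2 x, 2^-1 < x < 1 & g x b = c.
Proof.
move=> b1 c0 hb; have [rk k0 k1] := bias_threshold_gap c0 hb.
have r0 : 0 < 1 - b by rewrite subr_gt0.
have [x hx gx] := logit_gap_root_exists r0 rk k1.
by exists x; rewrite // g_eq_logit_gap.
Qed.

Lemma xhatP psi h b : b < 1 -> 0 < psi * (h - 1) -> 2 / (psi * (h - 1) + 2) < b ->
  2^-1 < xhat psi h b < 1 /\ g (xhat psi h b) b = psi * (h - 1).
Proof.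
move=> b1 c0 hb; have [x hx gx] := g_root_exists b1 c0 hb.
exact: (@xgetI R _ [set x | 2^-1 < x < 1 /\ g x b = psi * (h - 1)] x (conj hx gx)).
Qed.

Lemma xhat_unique psi h b x : b < 1 -> 0 < psi * (h - 1) ->
  2 / (psi * (h - 1) + 2) < b -> 2^-1 < x < 1 -> g x b = psi * (h - 1) ->
  x = xhat psi h b.
Proof.
move=> b1 c0 hb hx gx; have [ha ga] := xhatP b1 c0 hb.
exact: (g_root_unique b1 c0 hb hx ha gx ga).
Qed.

Lemma xhat_lt1 psi h b : xhat psi h b < 1.
Proof.
rewrite /xhat; case: xgetP => [x _ [/andP[] //] | _].
by rewrite invf_lt1 // ltr1n.
Qed.
End HomophilyRoot.

Section OpinionUpdate.
Variable R : realType.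
Implicit Types h b phi x m y : R.

Definition island_mean h y : R := (h * y + (1 - y)) / (h + 1).
Definition opinion_update b x m : R :=
  x `^ b * m / (x `^ b * m + (1 - x) `^ b * (1 - m)).

Lemma island_mean_bounds h y : 0 < h -> 0 <= y <= 1 -> 0 < island_mean h y < 1.
Proof.
move=> h0 /andP[y0 y1]; have h1 : 0 < h + 1 by lra.
by rewrite divr_gt0 ?ltr_pdivrMr //=; nra.
Qed.

Lemma island_mean_le h : 1 <= h -> {homo island_mean h : y z / y <= z}.
Proof. by move=> h1 y z yz; rewrite ler_pM2r ?invr_gt0; nra. Qed.

Lemma opinion_update_bounds b x m : 0 < x < 1 -> 0 < m < 1 ->
  0 < opinion_update b x m < 1.
Proof.
move=> /andP[x0 x1] /andP[m0 m1].
have A0 : 0 < x `^ b * m by rewrite mulr_gt0 ?powR_gt0.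
have B0 : 0 < (1 - x) `^ b * (1 - m) by rewrite mulr_gt0 ?powR_gt0 ?subr_gt0.
by rewrite divr_gt0 ?ltr_pdivrMr ?addr_gt0 //=; lra.
Qed.

Lemma opinion_update_le b x1 x2 m1 m2 : 0 <= b ->
  0 < x1 -> x1 <= x2 -> x2 < 1 -> 0 < m1 -> m1 <= m2 -> m2 < 1 ->
  opinion_update b x1 m1 <= opinion_update b x2 m2.
Proof.
move=> b0 x10 x12 x21 m10 m12 m21.
have A1 : 0 < x1 `^ b by apply: powR_gt0.
have A12 : x1 `^ b <= x2 `^ b by rewrite ge0_ler_powR ?nnegrE //; lra.
have B2 : 0 < (1 - x2) `^ b by rewrite powR_gt0 // subr_gt0.
have B12 : (1 - x2) `^ b <= (1 - x1) `^ b by rewrite ge0_ler_powR ?nnegrE //; lra.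
rewrite /opinion_update; move: A1 A12 B2 B12.
move: (x1 `^ b) (x2 `^ b) ((1 - x2) `^ b) ((1 - x1) `^ b).
move=> A1 A2 B2 B1 A1_0 A12 B2_0 B12.
have P1 : A1 * m1 <= A2 * m2 by apply: ler_pM; lra.
have P2 : B2 * (1 - m2) <= B1 * (1 - m1) by apply: ler_pM; lra.
have d1 : 0 < A1 * m1 + B1 * (1 - m1) by rewrite addr_gt0 ?mulr_gt0 ?subr_gt0 //; lra.
have d2 : 0 < A2 * m2 + B2 * (1 - m2) by rewrite addr_gt0 ?mulr_gt0 ?subr_gt0 //; lra.
rewrite ler_pdivrMr // mulrAC ler_pdivlMr //.
suff : A1 * m1 * (B2 * (1 - m2)) <= A2 * m2 * (B1 * (1 - m1)) by lra.
by apply: ler_pM => //; rewrite mulr_ge0 //; lra.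
Qed.

Lemma opinion_updateC b x m : 0 < x < 1 -> 0 < m < 1 ->
  opinion_update b (1 - x) (1 - m) = 1 - opinion_update b x m.
Proof.
move=> /andP[x0 x1] /andP[m0 m1]; rewrite /opinion_update !subKr.
have A0 : 0 < x `^ b * m by rewrite mulr_gt0 ?powR_gt0.
have B0 : 0 < (1 - x) `^ b * (1 - m) by rewrite mulr_gt0 ?powR_gt0 ?subr_gt0.
by field; apply/lt0r_neq0; rewrite addr_gt0.
Qed.

Lemma opinion_update_scale b x s d : 0 < d ->
  x `^ b * s / (x `^ b * s + (1 - x) `^ b * (d - s)) = opinion_update b x (s / d).
Proof.
move=> d0; have d_neq0 : d != 0 by rewrite lt0r_neq0.
rewrite /opinion_update.
have -> : x `^ b * (s / d) + (1 - x) `^ b * (1 - s / d) =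
          (x `^ b * s + (1 - x) `^ b * (d - s)) / d by field.
by rewrite invf_div !mulrA divfK.
Qed.

Lemma opinion_update_fixed b x m : 0 < x < 1 -> x = opinion_update b x m ->
  x `^ (1 - b) * (1 - m) = (1 - x) `^ (1 - b) * m.
Proof.
move=> /andP[x0 x1]; rewrite /opinion_update => xD.
have powR_split y : 0 < y -> y `^ b * y `^ (1 - b) = y.
  move=> y0; rewrite -powRD; last by rewrite (gt_eqF y0) implybT.
  by rewrite subrKC powRr1 // ltW.
have A0 : 0 < x `^ b by rewrite powR_gt0.
have B0 : 0 < (1 - x) `^ b by rewrite powR_gt0 // subr_gt0.
have D0 : x `^ b * m + (1 - x) `^ b * (1 - m) != 0.
  apply: contraPneq xD => ->; rewrite invr0 mulr0 => x_eq0.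
  by move: x0; rewrite x_eq0 ltxx.
have cross : x * (1 - x) `^ b * (1 - m) = (1 - x) * x `^ b * m.
  move/(congr1 (fun z => z * (x `^ b * m + (1 - x) `^ b * (1 - m)))): xD.
  by rewrite divfK //; lra.
apply: (mulfI (mulf_neq0 (lt0r_neq0 A0) (lt0r_neq0 B0))).
have -> : x `^ b * (1 - x) `^ b * (x `^ (1 - b) * (1 - m)) =
          x `^ b * x `^ (1 - b) * (1 - x) `^ b * (1 - m) by ring.
have -> : x `^ b * (1 - x) `^ b * ((1 - x) `^ (1 - b) * m) =
          (1 - x) `^ b * (1 - x) `^ (1 - b) * x `^ b * m by ring.
by rewrite !powR_split // subr_gt0.
Qed.

Lemma convex_comb_bounds phi (a c : R) :
  0 <= phi <= 1 -> 0 < a < 1 -> 0 < c < 1 -> 0 < phi * a + (1 - phi) * c < 1.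
Proof.
by move=> /andP[? ?] /andP[? ?] /andP[? ?]; apply/andP; split; case: (leP a c); nra.
Qed.
End OpinionUpdate.

Section EventualMonotonicity.
Variable R : realType.
Implicit Types u p q : nat -> R.

Definition sign_constant_from u (N : nat) : Prop :=
  (forall t, (N <= t)%N -> 0 <= u t) \/ (forall t, (N <= t)%N -> u t <= 0).

Lemma eventually_sign_constant p q :
  (forall t, 0 <= p t -> 0 <= q t.+1 -> 0 <= p t.+1) ->
  (forall t, 0 <= p t -> 0 <= q t -> 0 <= q t.+1) ->
  (forall t, p t <= 0 -> q t.+1 <= 0 -> p t.+1 <= 0) ->
  (forall t, p t <= 0 -> q t <= 0 -> q t.+1 <= 0) ->
  exists N, sign_constant_from p N /\ sign_constant_from q N.
Proof.
move=> up_p up_q dn_p dn_q.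
have stay (P : R -> Prop) T :
    (forall t, P (p t) -> P (q t) -> P (p t.+1) /\ P (q t.+1)) ->
    P (p T) -> P (q T) -> forall t, (T <= t)%N -> P (p t) /\ P (q t).
  move=> step pT qT t /subnKC <-.
  by elim: (t - T)%N => [|k [pk qk]]; rewrite ?addn0 ?addnS //; apply: step.
have [[T [pT qT]]|nonneg] := pselect (exists T, 0 <= p T /\ 0 <= q T).
  have := stay (fun z => 0 <= z) T _ pT qT => /(_ _)/= H.
  have {}H : forall t, (T <= t)%N -> 0 <= p t /\ 0 <= q t.
    by apply: H => t pt qt; have qt1 := up_q t pt qt; split=> //; apply: up_p.
  by exists T; split; left=> t /H[].
have [[T [pT qT]]|nonpos] := pselect (exists T, p T <= 0 /\ q T <= 0).
  have := stay (fun z => z <= 0) T _ pT qT => /(_ _)/= H.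
  have {}H : forall t, (T <= t)%N -> p t <= 0 /\ q t <= 0.
    by apply: H => t pt qt; have qt1 := dn_q t pt qt; split=> //; apply: dn_p.
  by exists T; split; right=> t /H[].
(* Otherwise p and q have strictly opposite signs, so p cannot change sign. *)
have opp t : (0 < p t /\ q t < 0) \/ (p t < 0 /\ 0 < q t).
  have nn : ~ (0 <= p t /\ 0 <= q t) by move=> ?; apply: nonneg; exists t.
  have np : ~ (p t <= 0 /\ q t <= 0) by move=> ?; apply: nonpos; exists t.
  by case: (ltgtP (p t) 0) => pt; case: (ltgtP (q t) 0) => qt;
    [case: np | right | case: np | left | case: nn | case: nn | case: np
    | case: nn | case: nn];
    split; lra.
exists 0%N.
case: (opp 0%N) => -[p0 _].
- have pos t : 0 < p t.
    elim: t => // t IH; case: (opp t.+1) => -[// pt qt].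
    by have := up_p t (ltW IH) (ltW qt); lra.
  by split; [left | right] => t _; case: (opp t) => -[]; have := pos t; lra.
- have neg t : p t < 0.
    elim: t => // t IH; case: (opp t.+1) => -[pt qt //].
    by have := dn_p t (ltW IH) (ltW qt); lra.
  by split; [right | left] => t _; case: (opp t) => -[]; have := neg t; lra.
Qed.

Lemma monotone_from_sign u N :
  sign_constant_from (fun t => u t.+1 - u t) N -> monotone_from u N.
Proof.
move=> [up|dn]; [left|right] => s t Ns /subnKC <-;
  elim: (t - s)%N => [|k IH]; rewrite ?addn0 // addnS.
- by apply: le_trans IH _; rewrite -subr_ge0 up // (leq_trans Ns) ?leq_addr.
- by apply: le_trans _ IH; rewrite -subr_le0 dn // (leq_trans Ns) ?leq_addr.
Qed.

Lemma monotone_from_le u N M : (N <= M)%N -> monotone_from u N -> monotone_from u M.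
Proof.
move=> NM [up|dn]; [left|right] => s t Ms st.
  exact: up (leq_trans NM Ms) st.
exact: dn (leq_trans NM Ms) st.
Qed.

Lemma monotone_from_cvg u N a c : monotone_from u N -> (forall t, a <= u t <= c) ->
  exists l : R, u @ \oo --> l.
Proof.
move=> mono bnd.
suff : cvgn ((fun t => u (t + N)%N) : R ^nat).
  by case/cvg_ex => l; rewrite cvg_shiftn => ul; exists l.
have homo s t : (s <= t)%N -> (N <= s + N)%N /\ (s + N <= t + N)%N.
  by move=> st; rewrite leq_addl leq_add2r.
case: mono => mono.
  apply: nondecreasing_is_cvgn => [s t /homo[]|]; first exact: mono.
  by exists c => _ [t _ <-]; case/andP: (bnd (t + N)%N).
apply: nonincreasing_is_cvgn => [s t /homo[]|]; first exact: mono.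
by exists a => _ [t _ <-]; case/andP: (bnd (t + N)%N).
Qed.

Lemma cvg_band u (l a c : R) T0 : u @ \oo --> l ->
  (forall t, (T0 <= t)%N -> a <= u t /\ u t < c) -> a <= l <= c.
Proof.
move=> ul band; apply/andP; split.
  by apply: (ler_cvg_to (cvg_cst _) ul); exists T0 => // t /= /band[].
by apply: (ler_cvg_to ul (cvg_cst _)); exists T0 => // t /= /band[_ /ltW].
Qed.
End EventualMonotonicity.

Section ReducedOrbit.
Variable R : realType.
Implicit Types (h b phi : R) (X Y : nat -> R).

Definition reduced_orbit h b phi X Y : Prop :=
  forall t, [/\ 0 < X t < 1, 0 < Y t < 1,
    X t.+1 = opinion_update b (X t) (island_mean h (Y t)) &
    Y t.+1 = phi * X t.+1 + (1 - phi) * island_mean h (Y t)].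

Lemma reduced_orbit_eventually_monotone h b phi X Y :
  1 <= h -> 0 <= b -> 0 <= phi <= 1 -> reduced_orbit h b phi X Y ->
  exists N, monotone_from X N /\ monotone_from Y N.
Proof.
move=> h1 b0 /andP[phi0 phi1] orbit.
have mean_bounds t : 0 < island_mean h (Y t) < 1.
  have [_ /andP[? ?] _ _] := orbit t.
  by apply: island_mean_bounds; rewrite ?(lt_le_trans ltr01 h1) ?ltW.
have X_le t s : X t <= X s -> Y t <= Y s -> X t.+1 <= X s.+1.
  move=> Xts /(island_mean_le h1) Yts.
  have [/andP[Xt0 _] _ -> _] := orbit t; have [/andP[_ Xs1] _ -> _] := orbit s.
  have /andP[mt0 _] := mean_bounds t; have /andP[_ ms1] := mean_bounds s.
  exact: opinion_update_le.
have Y_le t s : X t.+1 <= X s.+1 -> Y t <= Y s -> Y t.+1 <= Y s.+1.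
  move=> Xts /(island_mean_le h1) Yts.
  have [_ _ _ ->] := orbit t; have [_ _ _ ->] := orbit s.
  by rewrite lerD // ler_wpM2l // subr_ge0.
have [N [sX sY]] : exists N, sign_constant_from (fun t => X t.+2 - X t.+1) N /\
                             sign_constant_from (fun t => Y t.+1 - Y t) N.
  apply: eventually_sign_constant => t; rewrite ?subr_ge0 ?subr_le0.
  - exact: X_le.
  - exact: Y_le.
  - exact: X_le.
  - exact: Y_le.
exists N.+1; split.
  apply: monotone_from_sign.
  by case: sX => sX; [left | right] => -[//|t] Nt; apply: sX.
by apply: monotone_from_le (leqnSn N) _; apply: monotone_from_sign.
Qed.

Lemma reduced_orbit_cvg h b phi X Y N : reduced_orbit h b phi X Y ->
  monotone_from X N -> monotone_from Y N ->
  (exists LX : R, X @ \oo --> LX) /\ (exists LY : R, Y @ \oo --> LY).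
Proof.
move=> orbit monoX monoY; split.
  by apply: (monotone_from_cvg (a := 0) (c := 1) monoX) => t;
    have [/andP[? ?] _ _ _] := orbit t; rewrite !ltW.
by apply: (monotone_from_cvg (a := 0) (c := 1) monoY) => t;
  have [_ /andP[? ?] _ _] := orbit t; rewrite !ltW.
Qed.

Lemma reduced_orbit_fixed_limit h b phi X Y LX LY : 0 < h ->
  reduced_orbit h b phi X Y -> X @ \oo --> LX -> Y @ \oo --> LY -> 0 < LX < 1 ->
  LX = opinion_update b LX (island_mean h LY) /\
  LY = phi * LX + (1 - phi) * island_mean h LY.
Proof.
move=> h0 orbit cX cY /andP[LX0 LX1].
have LY01 : 0 <= LY <= 1.
  apply: (cvg_band (T0 := 0%N) cY) => t _.
  by have [_ /andP[Yt0 Yt1] _ _] := orbit t; split=> //; apply: ltW.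
have /andP[m0 m1] := island_mean_bounds h0 LY01.
have cX1 : (fun t => X t.+1) @ \oo --> LX by rewrite cvg_shiftS.
have cY1 : (fun t => Y t.+1) @ \oo --> LY by rewrite cvg_shiftS.
have cm : (fun t => island_mean h (Y t)) @ \oo --> island_mean h LY.
  apply: cvgM; [apply: cvgD; [apply: cvgM | apply: cvgB] | ];
    by [exact: cvg_cst | exact: cY].
have cpow z : 0 < z -> {for z, continuous (fun v : R => v `^ b)}.
  move=> z0; apply/differentiable_continuous/derivable1_diffP/derivable_powR.
  by rewrite in_itv /= andbT.
have cA : (fun t => X t `^ b) @ \oo --> LX `^ b.
  exact: (continuous_cvg _ (cpow _ LX0) cX).
have cB : (fun t => (1 - X t) `^ b) @ \oo --> (1 - LX) `^ b.
  have c1X : (fun t => 1 - X t) @ \oo --> 1 - LX by apply: cvgB => //; exact: cvg_cst.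
  by apply: (continuous_cvg _ (cpow _ _) c1X); rewrite subr_gt0.
(* Pass to the limit in [X t.+1 * denominator = numerator]: no continuity of the
   quotient is needed. *)
have D0 : 0 < LX `^ b * island_mean h LY + (1 - LX) `^ b * (1 - island_mean h LY).
  by apply: addr_gt0; apply: mulr_gt0; rewrite ?powR_gt0 ?subr_gt0.
have den_eq : (fun t => X t.+1 * (X t `^ b * island_mean h (Y t) +
                   (1 - X t) `^ b * (1 - island_mean h (Y t)))) =
              (fun t => X t `^ b * island_mean h (Y t)).
  apply/funext => t; have [/andP[Xt0 Xt1] /andP[Yt0 Yt1] -> _] := orbit t.
  have /andP[mt0 mt1] : 0 < island_mean h (Y t) < 1.
    by apply: island_mean_bounds; rewrite // !ltW.
  rewrite divfK // lt0r_neq0 //.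
  by apply: addr_gt0; apply: mulr_gt0; rewrite ?powR_gt0 ?subr_gt0.
split.
  apply: (mulIf (lt0r_neq0 D0)); rewrite /opinion_update divfK ?lt0r_neq0 //.
  have : (fun t => X t `^ b * island_mean h (Y t)) @ \oo -->
      LX * (LX `^ b * island_mean h LY + (1 - LX) `^ b * (1 - island_mean h LY)).
    rewrite -den_eq; apply: cvgM => //.
    exact: (cvgD (cvgM cA cm) (cvgM cB (cvgB (cvg_cst (1 : R)) cm))).
  by move=> H; apply: (@cvg_unique _ (@Rhausdorff R) _ _ _ _ H); apply: cvgM.
have Y_eq : (fun t => Y t.+1) =
    (fun t => phi * X t.+1 + (1 - phi) * island_mean h (Y t)).
  by apply/funext => t; have [_ _ _ ->] := orbit t.
apply: (@cvg_unique _ (@Rhausdorff R) _ _ _ _ cY1); rewrite Y_eq.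
exact: (cvgD (cvgM (cvg_cst phi) cX1) (cvgM (cvg_cst (1 - phi)) cm)).
Qed.

Lemma reduced_fixed_point h b phi x y :
  1 < h -> 0 < phi -> b < 1 -> 2^-1 < x < 1 ->
  x = opinion_update b x (island_mean h y) ->
  y = phi * x + (1 - phi) * island_mean h y ->
  g x b = phi * (h - 1) /\ y = (phi * (h + 1) * x + 1 - phi) / (phi * h + 2 - phi).
Proof.
move=> h1 phi0 b1 hx fixX fixY.
have c0 : 0 < phi * (h - 1) by rewrite mulr_gt0 // subr_gt0.
have c2 : phi * (h - 1) + 2 != 0 by rewrite lt0r_neq0 //; lra.
have mean : island_mean h y = contract_half (phi * (h - 1) / (phi * (h - 1) + 2)) x.
  have Em : island_mean h y * (h + 1) = h * y + (1 - y).
    by rewrite /island_mean divfK // lt0r_neq0 //; lra.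
  move: (island_mean h y) Em fixY => m Em Ey.
  have key : m * (phi * (h - 1) + 2) = phi * (h - 1) * x + 1.
    apply/eqP; rewrite -subr_eq0.
    have -> : m * (phi * (h - 1) + 2) - (phi * (h - 1) * x + 1) =
        m * (h + 1) - (h * y + (1 - y)) +
        (h - 1) * (y - (phi * x + (1 - phi) * m)) by ring.
    by rewrite -Ey Em !subrr mulr0 addr0.
  by apply: (mulIf c2); rewrite key /contract_half; field.
split; last by rewrite {1}fixY mean /contract_half; field; rewrite lt0r_neq0 //; lra.
apply/g_eq_balance; rewrite // -mean; apply: opinion_update_fixed => //.
by case/andP: hx => x0 x1; apply/andP; split; lra.
Qed.
End ReducedOrbit.

Section TwoIsland.
Variables (R : realType) (T : finType) (e : rel T) (V1 : {set T}).
Implicit Types (n : nat) (ps pd b phi : R) (x y : nat -> T -> R).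

Definition symmetric_state (u v : T -> R) (X Y : R) : Prop :=
  forall j, (u j, v j) = if j \in V1 then (X, Y) else (1 - X, 1 - Y).

Lemma two_island_nbr_sum n ps pd j (f : T -> R) al be :
  two_island e V1 n ps pd -> (forall k, f k = if k \in V1 then al else be) ->
  \sum_(k | e j k) w R e j k * f k =
    (if j \in V1 then n%:R * ps else n%:R * pd) * al +
    (if j \in V1 then n%:R * pd else n%:R * ps) * be.
Proof.
move=> [_ [_ [_ [_ [_ [_ [_ [_ [_ [_ hdeg]]]]]]]]]] hf; have [d1 d2] := hdeg j.
rewrite (bigID (mem V1)) /=.
have -> : \sum_(k | e j k && (k \in V1)) w R e j k * f k =
          \sum_(k in [set k in V1 | e j k]) al.
  by apply: eq_big => [k|k /andP[ejk kV]]; rewrite ?inE 1?andbC // hf kV /w ejk mul1r.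
have -> : \sum_(k | e j k && (k \notin V1)) w R e j k * f k =
          \sum_(k in [set k in ~: V1 | e j k]) be.
  apply: eq_big => [k|k /andP[ejk kV]]; rewrite ?inE 1?andbC //.
  by rewrite hf (negbTE kV) /w ejk mul1r.
by rewrite !sumr_const -d1 -d2 !mulr_natl.
Qed.

Lemma two_island_deg n ps pd j : two_island e V1 n ps pd ->
  deg R e j = n%:R * ps + n%:R * pd.
Proof.
move=> G; rewrite /deg.
rewrite (eq_bigr (fun k => w R e j k * 1)) => [|k _]; last by rewrite mulr1.
rewrite (two_island_nbr_sum (al := 1) (be := 1) j G); last by move=> k; case: ifP.
by case: ifP; rewrite !mulr1 // addrC.
Qed.

Lemma two_island_nbr_mean n ps pd j (f : T -> R) Y : two_island e V1 n ps pd ->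
  (forall k, f k = if k \in V1 then Y else 1 - Y) ->
  (\sum_(k | e j k) w R e j k * f k) / deg R e j =
    if j \in V1 then island_mean (ps / pd) Y else 1 - island_mean (ps / pd) Y.
Proof.
move=> G hf; have [n1 [pd0 [pdps _]]] := G.
have n0 : 0 < n%:R :> R by rewrite ltr0n.
have ps0 : 0 < ps by apply: lt_trans pdps.
rewrite (two_island_nbr_sum j G hf) (two_island_deg j G) /island_mean.
by case: ifP => _; field; rewrite ?lt0r_neq0 ?addr_gt0 ?divr_gt0 ?mulr_gt0.
Qed.

Lemma two_island_step n ps pd b phi x y t X Y :
  two_island e V1 n ps pd -> dual_dynamics e b phi x y ->
  0 < X < 1 -> 0 <= Y <= 1 -> symmetric_state (x t) (y t) X Y ->
  let X' := opinion_update b X (island_mean (ps / pd) Y) in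
  symmetric_state (x t.+1) (y t.+1) X'
    (phi * X' + (1 - phi) * island_mean (ps / pd) Y).
Proof.
move=> G dyn hX hY sym X' j; have [n1 [pd0 [pdps _]]] := G.
have /andP[m0 m1] : 0 < island_mean (ps / pd) Y < 1.
  by apply: island_mean_bounds; rewrite // divr_gt0 // (lt_trans pd0).
have yt k : y t k = if k \in V1 then Y else 1 - Y.
  by have := sym k; case: ifP => _ [_ ->].
have deg0 : 0 < deg R e j.
  by rewrite (two_island_deg j G) addr_gt0 ?mulr_gt0 ?ltr0n // (lt_trans pd0).
have avg : \sum_(k | e j k) w R e j k / deg R e j * y t k =
           (\sum_(k | e j k) w R e j k * y t k) / deg R e j.
  by rewrite mulr_suml; apply: eq_bigr => k _; rewrite mulrAC.
have [Ex ->] := dyn t j.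
rewrite Ex avg opinion_update_scale // (two_island_nbr_mean j G yt).
have := sym j; case: ifP => _ [-> _] //.
rewrite opinion_updateC //; last by rewrite m0 m1.
by congr pair; rewrite /X'; ring.
Qed.

Lemma two_island_reduced_orbit n ps pd b phi x y X0 Y0 i :
  two_island e V1 n ps pd -> dual_dynamics e b phi x y -> 0 <= phi <= 1 ->
  0 < X0 < 1 -> 0 < Y0 < 1 -> symmetric_state (x 0%N) (y 0%N) X0 Y0 -> i \in V1 ->
  reduced_orbit (ps / pd) b phi (fun t => x t i) (fun t => y t i).
Proof.
move=> G dyn /andP[phi0 phi1] hX0 hY0 sym0 iV; have [_ [pd0 [pdps _]]] := G.
have h0 : 0 < ps / pd by rewrite divr_gt0 // (lt_trans pd0).
have inv t : [/\ symmetric_state (x t) (y t) (x t i) (y t i),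
                 0 < x t i < 1 & 0 < y t i < 1].
  elim: t => [|t [sym hX /andP[y0 y1]]].
    by have := sym0 i; rewrite iV => -[-> ->].
  have hY : 0 <= y t i <= 1 by rewrite !ltW.
  have hm := island_mean_bounds h0 hY; have /andP[m0 m1] := hm.
  have /andP[u0 u1] := opinion_update_bounds b hX hm.
  have step := two_island_step G dyn hX hY sym.
  have := step i; rewrite iV => -[-> ->].
  split; [exact: step | by rewrite u0 u1 |].
  by apply: convex_comb_bounds; rewrite ?phi0 ?u0 ?m0.
move=> t; have [sym hX /andP[y0 y1]] := inv t; have [_ hX1 hY1] := inv t.+1.
have hY : 0 <= y t i <= 1 by rewrite !ltW.
have := two_island_step G dyn hX hY sym i; rewrite iV => -[Ex Ey].
by split; rewrite // ?y0 ?Ey ?Ex.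
Qed.
End TwoIsland.

Theorem lemmaB5 (R : realType) (T : finType) (e : rel T) (V1 : {set T})
    (n : nat) (ps pd phi b x0 y0 : R) (x y : nat -> T -> R) (i : T) :
  two_island e V1 n ps pd ->
  0 < phi -> phi < 1 ->
  2 / (phi * (ps / pd - 1) + 2) < b -> b < 1 ->
  2^-1 < x0 -> x0 < 1 -> 2^-1 <= y0 -> y0 <= x0 ->
  (forall j, j \in V1 -> x 0%N j = x0 /\ y 0%N j = y0) ->
  (forall j, j \notin V1 -> x 0%N j = 1 - x0 /\ y 0%N j = 1 - y0) ->
  dual_dynamics e b phi x y ->
  i \in V1 ->
  forall T0 : nat, (0 < T0)%N ->
  (forall t, (T0 <= t)%N ->
     xhat phi (ps / pd) b <= x t i /\ x t i < xhat 1 (ps / pd) b) ->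
  exists T1 : nat, (T0 < T1)%N /\
    monotone_from (fun t => x t i) T1 /\ monotone_from (fun t => y t i) T1 /\
    ((fun t => x t i) @ \oo --> (xhat phi (ps / pd) b : R)) /\
    ((fun t => y t i) @ \oo --> (phi * (ps / pd + 1) * xhat phi (ps / pd) b + 1 - phi)
                                  / (phi * (ps / pd) + 2 - phi)).
Proof.
move=> G phi0 phi1 hb b1 x0h x01 y0h y0x init1 init2 dyn iV T0 _ band.
have [_ [pd0 [pdps _]]] := G.
have h1 : 1 < ps / pd by rewrite ltr_pdivlMr // mul1r.
have c0 : 0 < phi * (ps / pd - 1) by rewrite mulr_gt0 // subr_gt0.
have b0 : 0 <= b by apply/ltW/(lt_trans _ hb)/divr_gt0; rewrite // addr_gt0.
have phi01 : 0 <= phi <= 1 by rewrite !ltW.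
have hx0 : 0 < x0 < 1 by rewrite x01 (lt_trans _ x0h).
have hy0 : 0 < y0 < 1 by rewrite (lt_le_trans _ y0h) ?(le_lt_trans y0x).
have sym0 : symmetric_state V1 (x 0%N) (y 0%N) x0 y0.
  move=> j; case: ifP => jV; last by case: (init2 j (negbT jV)) => -> ->.
  by case: (init1 j jV) => -> ->.
have orbit := two_island_reduced_orbit G dyn phi01 hx0 hy0 sym0 iV.
have [N [monoX monoY]] := reduced_orbit_eventually_monotone (ltW h1) b0 phi01 orbit.
have [[LX cX] [LY cY]] := reduced_orbit_cvg orbit monoX monoY.
have LX01 : 2^-1 < LX < 1.
  have [/andP[a_gt _] _] := xhatP b1 c0 hb; have /andP[lo hi] := cvg_band cX band.
  by rewrite (lt_le_trans a_gt lo) (le_lt_trans hi (xhat_lt1 _ _ _)).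
have LX01' : 0 < LX < 1 by case/andP: LX01 => LXh ->; rewrite (lt_trans _ LXh).
have [fixX fixY] := reduced_orbit_fixed_limit (lt_trans ltr01 h1) orbit cX cY LX01'.
have [gLX LYE] := reduced_fixed_point h1 phi0 b1 LX01 fixX fixY.
have LXE := xhat_unique b1 c0 hb LX01 gLX.
exists (N + T0).+1; split; first by rewrite ltnS leq_addl.
split; first exact: monotone_from_le (leqW (leq_addr _ _)) monoX.
split; first exact: monotone_from_le (leqW (leq_addr _ _)) monoY.
by rewrite -LXE -LYE.
Qed.
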